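(* Let $(n_1,\dots,n_k)$, $k\ge3$, be an admissible $k$-tuple of positive integers with $[n_1,\dots,n_k]=0$, and suppose there is exactly one index $j\in\{1,\dots,k\}$ with $n_j=1$. Then there are coprime integers $m$ and $n$ such that $[n_1,\dots,n_{j-1},2,n_{j+1},\dots,n_k]=\frac{m^2}{mn+1}$.
   Context: $[c_1,\dots,c_k]=c_1-\cfrac{1}{c_2-\cfrac{1}{\ddots-\cfrac1{c_k}}}$. A $k$-tuple of non-negative integers $(n_1,\dots,n_k)$ is admissible if every denominator appearing in $[n_1,\dots,n_k]$ is positive, i.e. $[n_j,\dots,n_k]>0$ for $j=2,\dots,k$. *)

From mathcomp Require Import all_boot all_order all_algebra.
Set Implicit Arguments. Unset Strict Implicit. Unset Printing Implicit Defensive.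
Import Order.TTheory GRing.Theory Num.Theory.
Local Open Scope ring_scope.

(* [c_1, ..., c_k] = c_1 - 1/[c_2, ..., c_k];  [c] = c.  (The empty list is
   given the value 0; it never occurs below.) *)
Fixpoint cfrac (s : seq nat) : rat :=
  match s with
  | [::] => 0
  | [:: c] => c%:R
  | c :: t => c%:R - (cfrac t)^-1
  end.

(* admissible: [n_j, ..., n_k] > 0 for j = 2, ..., k
   (0-based: drop j s for 1 <= j < size s). *)
Definition admissible (s : seq nat) : Prop :=
  forall j : nat, (1 <= j < size s)%N -> 0 < cfrac (drop j s).

(* Write [M_c] for the integer matrix [[c, -1], [1, 0]] and [M_s] for the
   product of the [M_c] along [s]. Its first column [(p, q)] satisfies
   [[s] = p / q] with [q > 0] as long as no denominator vanishes, and
   [det M_s = 1]. If [s = A ++ c :: B], then [M_s] is affine in [c], and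
   raising [c] by one adds [x * (p_A, q_A)] to [(p, q)], where [x] is the
   numerator of [B]. When [[s] = 0] we have [(p, q) = (0, 1)], and the
   determinant of [M_A] forces [x = p_A]; hence the modified tuple has
   numerator [p_A ^ 2] and denominator [p_A q_A + 1], and [p_A], [q_A] are
   coprime. Raising an entry can only increase every tail of an admissible
   tuple, so the modified tuple stays admissible and the fraction is its
   value. *)
From mathcomp Require Import all_boot all_order all_algebra.
From mathcomp Require Import ring zify.
Import Order.TTheory GRing.Theory Num.Theory.
Local Open Scope ring_scope.

(* [cont s v = M_s v]; [pq s] and [pq' s] are the two columns of [M_s]. *)
Fixpoint cont (s : seq nat) (v : int * int) : int * int :=
  if s is c :: t then let w := cont t v in (c%:Z * w.1 - w.2, w.1) else v.

Definition pq s := cont s (1, 0).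
Definition pq' s := cont s (0, 1).

Lemma cont_cons c t v :
  cont (c :: t) v = (c%:Z * (cont t v).1 - (cont t v).2, (cont t v).1).
Proof. by []. Qed.

Lemma cont_cat s t v : cont (s ++ t) v = cont s (cont t v).
Proof. by elim: s => //= c s ->. Qed.

Lemma cont_linear s x y :
  cont s (x, y) = (x * (pq s).1 + y * (pq' s).1, x * (pq s).2 + y * (pq' s).2).
Proof.
rewrite /pq /pq'; elim: s => [|c s IH] /=; first by congr pair; ring.
by rewrite IH /=; congr pair; ring.
Qed.

Lemma det_pq s : (pq s).1 * (pq' s).2 - (pq' s).1 * (pq s).2 = 1.
Proof.
rewrite /pq /pq'; elim: s => [|c s IH] /=; first by rewrite mulr1 mulr0 subr0.
by rewrite -[RHS]IH; ring.
Qed.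

Lemma coprimez_pq s : coprimez (pq s).1 (pq s).2.
Proof.
apply/coprimezP; exists ((pq' s).2, - (pq' s).1) => /=.
by rewrite -(det_pq s); ring.
Qed.

Lemma pq_mid_succ A c B :
  pq (A ++ c.+1 :: B) = ((pq (A ++ c :: B)).1 + (pq B).1 * (pq A).1,
                         (pq (A ++ c :: B)).2 + (pq B).1 * (pq A).2).
Proof.
rewrite /pq !cont_cat !cont_cons -/(pq B) !cont_linear intS.
by congr pair; rewrite /=; ring.
Qed.

Lemma pq_mid_eq01 {A c B} : pq (A ++ c :: B) = (0, 1) -> (pq B).1 = (pq A).1.
Proof.
rewrite /pq cont_cat cont_cons -/(pq B) cont_linear -/(pq A).
move: (pq A) (pq' A) (pq B) (det_pq A) => [a b] [a' b'] [x z] /= det [e1 e2].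
have : x * (a * b' - a' * b) =
    a * ((c%:Z * x - z) * b + x * b') - b * ((c%:Z * x - z) * a + x * a').
  by ring.
by rewrite det e1 e2 !mulr1 mulr0 subr0.
Qed.

Lemma pq_mid_succ_eq01 {A c B} : pq (A ++ c :: B) = (0, 1) ->
  pq (A ++ c.+1 :: B) = ((pq A).1 ^+ 2, (pq A).1 * (pq A).2 + 1).
Proof.
move=> pq_eq01; rewrite pq_mid_succ pq_eq01 (pq_mid_eq01 pq_eq01) /=.
by rewrite add0r addrC expr2.
Qed.

Lemma admissible_drop {s} i : admissible s -> admissible (drop i s).
Proof.
move=> adm j /andP[j1 js]; rewrite drop_drop; apply: adm.
by rewrite size_drop in js; apply/andP; split; lia.
Qed.

Lemma cfrac_cons c t : t != [::] -> cfrac (c :: t) = c%:R - (cfrac t)^-1.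
Proof. by case: t. Qed.

Lemma cfrac_pq {s} : s != [::] -> admissible s ->
  0 < (pq s).2 /\ cfrac s = (pq s).1%:~R / (pq s).2%:~R.
Proof.
elim: s => [//|c [|d t] IH] _ adm; first by rewrite /pq /= mulr1 subr0 divr1.
have [q_gt0 Et] := IH isT (admissible_drop 1 adm).
have p_gt0 : 0 < (pq (d :: t)).1.
  have : 0 < cfrac (d :: t) * (pq (d :: t)).2%:~R.
    by rewrite mulr_gt0 ?ltr0z //; apply: (adm 1%N).
  by rewrite Et mulfVK ?intr_eq0 ?gt_eqF // ltr0z.
rewrite /pq cont_cons -/(pq (d :: t)) cfrac_cons // Et.
move: (pq (d :: t)) p_gt0 q_gt0 => [p q] /= p_gt0 q_gt0.
split=> //; rewrite invf_div intrB intrM.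
by field; rewrite intr_eq0 gt_eqF.
Qed.

Lemma pq_cfrac_eq0 {s} :
  s != [::] -> admissible s -> cfrac s = 0 -> pq s = (0, 1).
Proof.
move=> s0 adm; have [q_gt0 ->] := cfrac_pq s0 adm.
move/eqP; rewrite mulf_eq0 invr_eq0 !intr_eq0 (gt_eqF q_gt0) orbF => /eqP p0.
have := det_pq s; rewrite p0.
case: (pq s) p0 q_gt0 => p q /= -> q_gt0 det; congr pair.
have /intUnitRing.unitzPl : - (pq' s).1 * q = 1 by rewrite -det; ring.
by rewrite qualifE => /orP[/eqP // | /eqP q_N1]; rewrite q_N1 in q_gt0.
Qed.

Lemma cfrac_mid_le {A c d B} : admissible (A ++ c :: B) -> (c <= d)%N ->
  cfrac (A ++ c :: B) <= cfrac (A ++ d :: B).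
Proof.
move=> + cd; elim: A => [|a A IH] adm.
  by case: B {adm} => [|b B] /=; rewrite ?lerD2r ler_nat.
have ne x : A ++ x :: B != [::] by case: A {IH adm}.
rewrite !cat_cons !cfrac_cons // lerD2l lerN2.
have pos : 0 < cfrac (A ++ c :: B).
  by have := adm 1%N; rewrite /= size_cat /= drop0 addnS; apply.
have admA : admissible (A ++ c :: B).
  by move: (admissible_drop 1 adm); rewrite /= drop0.
by rewrite lef_pV2 ?posrE ?IH // (lt_le_trans pos) ?IH.
Qed.

Lemma drop_cat_leq (T : Type) (s1 s2 : seq T) i : (i <= size s1)%N ->
  drop i (s1 ++ s2) = drop i s1 ++ s2.
Proof.
rewrite drop_cat leq_eqVlt => /orP[/eqP ->|->] //.
by rewrite ltnn subnn drop_size drop0.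
Qed.

Lemma admissible_mid_le {A c d B} : admissible (A ++ c :: B) -> (c <= d)%N ->
  admissible (A ++ d :: B).
Proof.
move=> adm cd i /andP[i1]; rewrite !size_cat /= => iS.
have := adm i; rewrite !size_cat /= i1 iS => /(_ isT) pos.
case: (leqP i (size A)) => iA.
  rewrite !drop_cat_leq // in pos *.
  apply: lt_le_trans pos (cfrac_mid_le _ cd).
  by rewrite -drop_cat_leq //; exact: admissible_drop.
move: pos; rewrite !drop_cat ltnNge (ltnW iA) /=.
by rewrite -(subnSK iA).
Qed.

Theorem lemma2p4 (s : seq nat) (j : nat) :
  (3 <= size s)%N ->
  all (fun c => 0 < c)%N s ->
  admissible s ->
  cfrac s = 0 ->
  (j < size s)%N ->
  nth 0%N s j = 1%N ->
  (forall i : nat, (i < size s)%N -> nth 0%N s i = 1%N -> i = j) ->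
  exists m n : int,
    coprimez m n /\ m * n + 1 != 0 /\
    cfrac (set_nth 0%N s j 2%N) = (m ^+ 2)%:~R / (m * n + 1)%:~R.
Proof.
move=> _ _ adm s0 lt_j_s s_j _.
have def_s : s = take j s ++ 1%N :: drop j.+1 s.
  by rewrite -s_j -drop_nth // cat_take_drop.
rewrite set_nthE lt_j_s; move: (take j s) (drop j.+1 s) def_s => A B def_s.
subst s; have nonnil x : A ++ x :: B != [::] by case: A {adm s0 lt_j_s s_j}.
have adm2 : admissible (A ++ 2%N :: B) by apply: admissible_mid_le adm _.
have [den_gt0 ->] := cfrac_pq (nonnil 2%N) adm2.
rewrite (pq_mid_succ_eq01 (pq_cfrac_eq0 (nonnil 1%N) adm s0)) /= in den_gt0 *.
exists (pq A).1, (pq A).2; split; first exact: coprimez_pq.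
by rewrite gt_eqF.
Qed.
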